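(* Let $m\ge2$ be even and $n\ge 2$. If $\mathcal{C}_1$ and $\mathcal{C}_2$ are positive semi-definite Cauchy tensors of order $m$ and dimension $n$, then their Hadamard product $\mathcal{C}_1\circ\mathcal{C}_2$ is positive semi-definite.
   Context: The Cauchy tensor with generating vector $c\in\mathbb{R}^n$ (with all sums $c_{i_1}+\cdots+c_{i_m}\neq0$) has entries $\frac{1}{c_{i_1}+\cdots+c_{i_m}}$, $i_j\in\{1,\dots,n\}$. The Hadamard product of tensors $\mathcal{A}=(a_{i_1\cdots i_m})$, $\mathcal{B}=(b_{i_1\cdots i_m})$ is $\mathcal{A}\circ\mathcal{B}=(a_{i_1\cdots i_m}b_{i_1\cdots i_m})$. A tensor $\mathcal{A}$ of even order is positive semi-definite if $\sum_{i_1,\dots,i_m}a_{i_1\cdots i_m}x_{i_1}\cdots x_{i_m}\ge0$ for all $x\in\mathbb{R}^n$. *)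

From HB Require Import structures.
From mathcomp Require Import all_boot all_order all_algebra.
Set Implicit Arguments. Unset Strict Implicit. Unset Printing Implicit Defensive.
Import Order.TTheory GRing.Theory Num.Theory.
Local Open Scope ring_scope.

(* A real tensor of order m and dimension n: entries indexed by
   (i_1,...,i_m) in {0..n-1}^m, represented as finite functions 'I_m -> 'I_n. *)
Definition tensor (R : Type) (m n : nat) := {ffun 'I_m -> 'I_n} -> R.

Definition cauchy_tensor (R : realFieldType) (m n : nat) (c : 'I_n -> R)
  : tensor R m n := fun idx => (\sum_(j < m) c (idx j))^-1.

Definition is_cauchy_tensor (R : realFieldType) (m n : nat) (A : tensor R m n) :=
  exists c : 'I_n -> R,
    (forall idx : {ffun 'I_m -> 'I_n}, \sum_(j < m) c (idx j) != 0) /\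
    A = cauchy_tensor c.

Definition tensor_form (R : realFieldType) (m n : nat) (A : tensor R m n)
  (x : 'I_n -> R) : R :=
  \sum_(idx : {ffun 'I_m -> 'I_n}) A idx * \prod_(j < m) x (idx j).

Definition psd_tensor (R : realFieldType) (m n : nat) (A : tensor R m n) :=
  forall x : 'I_n -> R, 0 <= tensor_form A x.

Definition hadamard (R : realFieldType) (m n : nat) (A B : tensor R m n)
  : tensor R m n := fun idx => A idx * B idx.

(* If p > 0, the Cauchy kernel 1/(p_i + p_j) is positive semidefinite, and more
   generally K_ij / (p_i + p_j) is positive semidefinite whenever K is: choosing
   an index i0 in the support of z,
     z_i z_j / (p_i + p_j) = 2 p_i0 a_i a_j + w_i w_j / (p_i + p_j)
   with a_i = z_i / (p_i + p_i0) and w_i = z_i (p_i - p_i0) / (p_i + p_i0), and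
   w has strictly smaller support, so induction on the support applies.
   Applying this twice shows that 1 / ((p_i + p_j)(q_i + q_j)) is positive
   semidefinite.  A PSD Cauchy tensor has a positive generating vector (test it
   on unit vectors), and a form of even order 2k is a quadratic form in the
   degree-k monomials; for the Hadamard product of Cauchy tensors its kernel is
   the product kernel above, with p, q the sums of the generating vectors over
   the two halves of the index. *)

From HB Require Import structures.
From mathcomp Require Import all_boot all_order all_algebra.
From mathcomp Require Import ring lra.

Set Implicit Arguments.
Unset Strict Implicit.
Unset Printing Implicit Defensive.
Import Order.TTheory GRing.Theory Num.Theory.
Local Open Scope ring_scope.

Section PsdKernels.
Variables (R : realFieldType) (I : finType).

Lemma support_ind (P : (I -> R) -> Prop) :
  (forall z, (forall i, z i = 0) -> P z) ->
  (forall z i0, z i0 != 0 ->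
     (forall w, (forall i, z i = 0 -> w i = 0) -> w i0 = 0 -> P w) -> P z) ->
  forall z, P z.
Proof.
move=> P0 PS z; have [N] := ubnP #|[set i | z i != 0]|.
elim: N z => // N IH z supp_lt.
case: (boolP [exists i, z i != 0]) => [/existsP [i0 zi0] | /existsPn z0].
  apply: (PS z i0 zi0) => w supp_w wi0; apply: IH.
  rewrite -ltnS; apply: leq_trans supp_lt; rewrite ltnS; apply: proper_card; apply/properP.
  split; last by exists i0; rewrite !inE ?zi0 ?wi0 ?eqxx.
  apply/subsetP => i; rewrite !inE; apply: contra => /eqP zi.
  by rewrite supp_w.
by apply: P0 => i; apply/eqP; rewrite -[_ == _]negbK z0.
Qed.

Definition kernel_form (K : I -> I -> R) (z : I -> R) : R :=
  \sum_i \sum_j z i * z j * K i j.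

Definition psd_kernel (K : I -> I -> R) := forall z, 0 <= kernel_form K z.

Lemma eq_kernel_form (K K' : I -> I -> R) :
  K =2 K' -> kernel_form K =1 kernel_form K'.
Proof.
by move=> eqK z; apply: eq_bigr => i _; apply: eq_bigr => j _; rewrite eqK.
Qed.

Lemma psd_kernel1 : psd_kernel (fun _ _ => 1).
Proof.
move=> z; rewrite /kernel_form.
under eq_bigr => i _ do under eq_bigr => j _ do rewrite mulr1.
by rewrite -big_distrlr sqr_ge0.
Qed.

Lemma psd_kernel_div_add (K : I -> I -> R) (p : I -> R) :
  psd_kernel K -> (forall i, 0 < p i) ->
  psd_kernel (fun i j => K i j / (p i + p j)).
Proof.
move=> psdK p_gt0; elim/support_ind => [z z0 | z i0 _ IH].
  by rewrite /kernel_form big1 // => i _; rewrite big1 // => j _; rewrite z0 !mul0r.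
pose a i := z i / (p i + p i0).
pose D i := (p i - p i0) / (p i + p i0).
have split_term i j : z i * z j * (K i j / (p i + p j)) =
    2 * p i0 * (a i * a j * K i j) + z i * D i * (z j * D j) * (K i j / (p i + p j)).
  have := p_gt0 i; have := p_gt0 j; have := p_gt0 i0 => pi0 pj pi.
  by rewrite /a /D; field; rewrite ?lt0r_neq0 //; lra.
rewrite /kernel_form.
under eq_bigr => i _ do under eq_bigr => j _ do rewrite split_term.
under eq_bigr => i _ do rewrite big_split /= -mulr_sumr.
rewrite big_split /= -mulr_sumr addr_ge0 //.
  by rewrite mulr_ge0 ?psdK //; have := p_gt0 i0; lra.
by apply: IH => [i ->|]; rewrite ?mul0r // /D subrr mul0r mulr0.
Qed.

Lemma psd_cauchy_product_kernel (p q : I -> R) :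
  (forall i, 0 < p i) -> (forall i, 0 < q i) ->
  psd_kernel (fun i j => ((p i + p j) * (q i + q j))^-1).
Proof.
move=> p_gt0 q_gt0 z.
rewrite (eq_kernel_form (K' := fun i j => 1 / (p i + p j) / (q i + q j))).
  by do 2 apply: psd_kernel_div_add => //; exact: psd_kernel1.
by move=> i j; rewrite invfM mul1r.
Qed.

End PsdKernels.

Section EvenOrderForms.
Variables (R : realFieldType) (k n : nat).

Definition ffun_cat (a b : {ffun 'I_k -> 'I_n}) : {ffun 'I_(k + k) -> 'I_n} :=
  [ffun i => match split i with inl j => a j | inr j => b j end].

Lemma ffun_cat_lshift a b j : ffun_cat a b (lshift k j) = a j.
Proof. by rewrite ffunE (unsplitK (inl j)). Qed.

Lemma ffun_cat_rshift a b j : ffun_cat a b (rshift k j) = b j.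
Proof. by rewrite ffunE (unsplitK (inr j)). Qed.

Lemma ffun_cat_bij : bijective (fun ab => ffun_cat ab.1 ab.2).
Proof.
exists (fun f : {ffun 'I_(k + k) -> 'I_n} =>
  ([ffun j => f (lshift k j)], [ffun j => f (rshift k j)])).
  case=> a b /=; congr pair; apply/ffunP => j;
  by rewrite ffunE ?ffun_cat_lshift ?ffun_cat_rshift.
by move=> f; apply/ffunP => i; rewrite ffunE; case: split_ordP => j ->; rewrite ffunE.
Qed.

Lemma sum_ffun_cat (F : 'I_n -> R) a b :
  \sum_(i < k + k) F (ffun_cat a b i) = \sum_(j < k) F (a j) + \sum_(j < k) F (b j).
Proof.
rewrite big_split_ord; congr (_ + _); apply: eq_bigr => j _.
  by rewrite ffun_cat_lshift.
by rewrite ffun_cat_rshift.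
Qed.

Lemma prod_ffun_cat (F : 'I_n -> R) a b :
  \prod_(i < k + k) F (ffun_cat a b i) = \prod_(j < k) F (a j) * \prod_(j < k) F (b j).
Proof.
rewrite big_split_ord; congr (_ * _); apply: eq_bigr => j _.
  by rewrite ffun_cat_lshift.
by rewrite ffun_cat_rshift.
Qed.

Lemma tensor_form_addnn (A : tensor R (k + k) n) (x : 'I_n -> R) :
  tensor_form A x =
  kernel_form (fun a b => A (ffun_cat a b)) (fun a => \prod_(j < k) x (a j)).
Proof.
rewrite /tensor_form /kernel_form (reindex _ (onW_bij _ ffun_cat_bij)) pair_bigA /=.
by apply: eq_bigr => -[a b] _; rewrite prod_ffun_cat mulrC.
Qed.

End EvenOrderForms.

Lemma cauchy_tensor_gt0 (R : realFieldType) (m n : nat) (c : 'I_n -> R) :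
  (0 < m)%N -> (forall idx : {ffun 'I_m -> 'I_n}, \sum_(j < m) c (idx j) != 0) ->
  psd_tensor (cauchy_tensor (m := m) c) -> forall i, 0 < c i.
Proof.
move=> m_gt0 c_neq0 psd_c i.
have := psd_c (fun l => (l == i)%:R); rewrite /tensor_form.
rewrite (bigD1 [ffun=> i]) //= [X in _ + X]big1; last first.
  move=> idx idx_neq; have [j idx_j] : exists j, idx j != i.
    apply/existsP; apply: contraR idx_neq => /existsPn idx_i.
    by apply/eqP/ffunP => j; rewrite ffunE; apply/eqP; rewrite -[_ == _]negbK.
  by rewrite (bigD1 j) //= (negbTE idx_j) mul0r mulr0.
rewrite addr0 big1 ?mulr1 => [|j _]; last by rewrite ffunE eqxx.
have := c_neq0 [ffun=> i]; rewrite /cauchy_tensor.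
under eq_bigr => j _ do rewrite ffunE.
rewrite sumr_const card_ord invr_ge0 => mc_neq0 mc_ge0.
by rewrite -(pmulrn_lgt0 _ m_gt0) lt_def mc_neq0.
Qed.

Lemma sum_ord_gt0 (R : realFieldType) (k : nat) (F : 'I_k -> R) :
  (0 < k)%N -> (forall j, 0 < F j) -> 0 < \sum_(j < k) F j.
Proof.
case: k F => // k F _ F_gt0; rewrite big_ord_recl ltr_wpDr ?F_gt0 //.
by rewrite sumr_ge0 // => j _; apply: ltW.
Qed.

Theorem corollary3p2 (R : realFieldType) (m n : nat)
  (hm : (2 <= m)%N) (hmeven : ~~ odd m) (hn : (2 <= n)%N)
  (C1 C2 : tensor R m n) :
  is_cauchy_tensor C1 -> is_cauchy_tensor C2 ->
  psd_tensor C1 -> psd_tensor C2 ->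
  psd_tensor (hadamard C1 C2).
Proof.
move=> [c [c_neq0 ->]] [d [d_neq0 ->]] psd_c psd_d.
have c_gt0 := cauchy_tensor_gt0 (ltnW hm) c_neq0 psd_c.
have d_gt0 := cauchy_tensor_gt0 (ltnW hm) d_neq0 psd_d.
have m_double : m = (m./2 + m./2)%N.
  by rewrite addnn -[LHS]odd_double_half (negbTE hmeven).
have k_gt0 : (0 < m./2)%N.
  by rewrite lt0n; apply: contraTneq hm => k0; rewrite m_double k0.
move: (m./2) m_double k_gt0 c d {c_neq0 d_neq0 psd_c psd_d} c_gt0 d_gt0.
move=> k -> k_gt0 c d c_gt0 d_gt0 x.
rewrite tensor_form_addnn (eq_kernel_form (K' := fun a b : {ffun 'I_k -> 'I_n} =>
    (((\sum_(j < k) c (a j)) + \sum_(j < k) c (b j)) *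
     ((\sum_(j < k) d (a j)) + \sum_(j < k) d (b j)))^-1)).
  by apply: psd_cauchy_product_kernel => a; apply: sum_ord_gt0.
by move=> a b; rewrite /hadamard /cauchy_tensor !sum_ffun_cat invfM.
Qed.
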